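(* Let $A \in \mathbb{C}^{N\times N}$, let $\mathcal{P}$ be a linear subspace of $\mathbb{C}^N$, and let $\{\omega_j\}_{j\in\mathbb{N}} \subset \mathbb{C}\setminus\{0\}$. Let $\mathcal{G}_j$, $j \in \mathbb{N}_0$, be the Sonneveld spaces and $p_{i,j}$ the stabilization polynomials defined from these data (see context). Then for all $i<j$ in $\mathbb{N}_0$, $$\mathcal{G}_j = p_{i,j}(A)\cdot\big(\mathcal{G}_i \cap \mathcal{K}_{j-i}(A^H;\mathcal{P})^{\perp}\big).$$
   Context: For a subspace $\mathcal{T}\le\mathbb{C}^N$ and $j\in\mathbb{N}$, the block Krylov subspace of level $j$ is $\mathcal{K}_j(A;\mathcal{T}) := \operatorname{span}\{A^k \mathcal{T} : k=0,\dots,j-1\}$ (the sum of the subspaces $A^k\mathcal{T}$), and $\mathcal{K}_j(A^H;\mathcal{P})^\perp$ denotes the orthogonal complement of $\mathcal{K}_j(A^H;\mathcal{P})$ in $\mathbb{C}^N$ with respect to the standard Hermitian inner product; $A^H$ is the conjugate transpose. Sonneveld spaces: $\mathcal{G}_0 := \mathbb{C}^N$ and $\mathcal{G}_j := (I - \omega_j A)\cdot(\mathcal{G}_{j-1}\cap \mathcal{P}^\perp)$ for $j\in\mathbb{N}$. Stabilization polynomials: $p_{i,j}(t) := \prod_{k=i+1}^{j}(1-\omega_k t)$ for $j>i\ge 0$. *)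

(* C^N is modelled by row vectors 'rV[R[i]]_N with R : realType
   (so R[i] is the field of complex numbers); a linear subspace of C^N is the
   row space (mxalgebra, %MS) of a square matrix 'M[R[i]]_N. *)
From HB Require Import structures.
From mathcomp Require Import all_boot all_order all_algebra.
From mathcomp Require Import reals.
From mathcomp.real_closed Require Import complex.
Set Implicit Arguments. Unset Strict Implicit. Unset Printing Implicit Defensive.
Import Order.TTheory GRing.Theory Num.Theory.
Local Open Scope ring_scope.

Section Defs.
Variables (R : realType) (N : nat).
Local Notation C := R[i].

Definition adjH (A : 'M[C]_N) : 'M[C]_N := (map_mx (@conjc R) A)^T.

(* image M . S of the subspace S under the linear map x |-> M x.  A vector x
   of C^N is stored as the row vector x^T, so M x corresponds to x^T *m M^T. *)
Definition mximg (M S : 'M[C]_N) : 'M[C]_N := (S *m M^T)%MS.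

(* orthogonal complement of S w.r.t. the standard Hermitian inner product
   <x, y> = \sum_k x_k * conj(y_k):  x is in S^perp iff x *m (conj S)^T = 0 *)
Definition orthc (S : 'M[C]_N) : 'M[C]_N := kermx (map_mx (@conjc R) S)^T.

Definition krylov (A T : 'M[C]_N) (j : nat) : 'M[C]_N :=
  (\sum_(k < j) mximg (A ^+ k) T)%MS.

Fixpoint sonneveld (A P : 'M[C]_N) (omega : nat -> C) (j : nat) : 'M[C]_N :=
  match j with
  | 0 => 1%:M
  | j'.+1 => mximg (1%:M - omega j'.+1 *: A)
                   (sonneveld A P omega j' :&: orthc P)%MS
  end.

Definition poly_mx (p : {poly C}) (A : 'M[C]_N) : 'M[C]_N :=
  \sum_(k < size p) p`_k *: A ^+ k.

End Defs.

Definition stabpoly (R : realType) (omega : nat -> R[i]) (i j : nat) : {poly R[i]} :=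
  \prod_(i.+1 <= k < j.+1) (1 - omega k *: 'X).

(** If [z] is orthogonal to [K_m(A^H; P)], then
    [A^k z] lies in [P^perp] for all [k < m]; since [p_{i,i+m}] has degree
    exactly [m] (all [omega_k] are nonzero), [p_{i,i+m}(A) z] lies in [P^perp]
    if and only if its leading term [A^m z] does, i.e. if and only if [z] is
    orthogonal to [K_{m+1}(A^H; P)].  Hence intersecting
    [G_{i+m} = p_{i,i+m}(A) (G_i cap K_m^perp)] with [P^perp] amounts to
    replacing [K_m] by [K_{m+1}], and applying [I - omega_{i+m+1} A] extends
    [p_{i,i+m}] to [p_{i,i+m+1}]. *)
From HB Require Import structures.
From mathcomp Require Import all_boot all_order all_algebra.
From mathcomp Require Import reals.
From mathcomp.real_closed Require Import complex.
Import Order.TTheory GRing.Theory Num.Theory.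
Local Open Scope ring_scope.

Set Implicit Arguments.
Unset Strict Implicit.

Section SubspaceOperations.
Variables (R : realType) (N : nat).
Local Notation C := R[i].
Local Notation cj M := (map_mx (@conjc R) M).
Implicit Types (A M Q S P : 'M[C]_N) (x : 'rV[C]_N).

Lemma map_conjcK m n (M : 'M[C]_(m, n)) : cj (cj M) = M.
Proof. by rewrite -map_mx_comp; apply: map_mx_id => z; apply: conjcK. Qed.

Lemma sub_mximgP M S x :
  reflect (exists2 y : 'rV_N, (y <= S)%MS & x = y *m M^T) (x <= mximg M S)%MS.
Proof.
apply: (iffP idP) => [/submxP [D ->] | [y /submxP [D ->] ->]].
  by exists (D *m S); [exact: submxMl | rewrite /mximg mulmxA].
by rewrite /mximg -mulmxA submxMl.
Qed.

Lemma mximgM M Q S : mximg (M *m Q) S = mximg M (mximg Q S).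
Proof. by rewrite /mximg trmx_mul mulmxA. Qed.

Lemma mximg1 S : mximg 1%:M S = S.
Proof. by rewrite /mximg trmx1 mulmx1. Qed.

Lemma sub_orthcE S x : (x <= orthc S)%MS = (S *m (cj x)^T == 0).
Proof.
rewrite /orthc sub_kermx.
have -> : x *m (cj S)^T = (cj (S *m (cj x)^T))^T.
  by rewrite map_mxM -map_trmx map_conjcK trmx_mul trmxK.
by rewrite trmx_eq0 map_mx_eq0.
Qed.

Lemma adjHM A M : adjH (A *m M) = adjH M *m adjH A.
Proof. by rewrite /adjH map_mxM trmx_mul. Qed.

Lemma adjH_exp A k : adjH (A ^+ k) = adjH A ^+ k.
Proof.
elim: k => [|k IHk]; first by rewrite !expr0 /adjH map_mx1 trmx1.
by rewrite exprS exprSr -!mulmxE adjHM IHk.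
Qed.

Lemma sub_orthc_mximg_adjH M P x :
  (x <= orthc (mximg (adjH M) P))%MS = (x *m M^T <= orthc P)%MS.
Proof.
rewrite !sub_orthcE /mximg /adjH trmxK map_mxM trmx_mul -map_trmx trmxK.
by rewrite mulmxA.
Qed.

Lemma sub_orthc_krylovP A P m x :
  reflect (forall k, (k < m)%N -> (x *m (A ^+ k)^T <= orthc P)%MS)
          (x <= orthc (krylov (adjH A) P m))%MS.
Proof.
rewrite sub_orthcE -sub_kermx; apply: (iffP sumsmx_subP) => [H k km | H k _].
  by rewrite -sub_orthc_mximg_adjH adjH_exp sub_orthcE -sub_kermx (H (Ordinal km)).
by rewrite sub_kermx -sub_orthcE -adjH_exp sub_orthc_mximg_adjH H.
Qed.

Lemma sub_orthc_krylovS A P m x :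
  (x <= orthc (krylov (adjH A) P m.+1))%MS =
  (x <= orthc (krylov (adjH A) P m))%MS && (x *m (A ^+ m)^T <= orthc P)%MS.
Proof.
apply/sub_orthc_krylovP/andP => [H | [/sub_orthc_krylovP H HA] k].
  by split; [apply/sub_orthc_krylovP => k km; apply/H/ltnW | apply: H].
by rewrite ltnS leq_eqVlt => /predU1P [-> //|]; apply: H.
Qed.

(* Only the leading term [p_m A^m x] of [p(A) x] can leave [P^perp]. *)
Lemma sub_orthc_poly_mx A P (p : {poly C}) m x :
  size p = m.+1 -> (x <= orthc (krylov (adjH A) P m))%MS ->
  (x *m (poly_mx p A)^T <= orthc P)%MS = (x *m (A ^+ m)^T <= orthc P)%MS.
Proof.
move=> sz_p /sub_orthc_krylovP xK.
have lead_p : p`_m != 0.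
  by rewrite -[m]/(m.+1.-1) -sz_p lead_coef_eq0 -size_poly_eq0 sz_p.
rewrite /orthc !sub_kermx.
suff -> : x *m (poly_mx p A)^T *m (cj P)^T =
          p`_m *: (x *m (A ^+ m)^T *m (cj P)^T) by rewrite scaler_eq0 (negPf lead_p).
rewrite /poly_mx linear_sum mulmx_sumr mulmx_suml sz_p.
rewrite (bigD1 ord_max) //= big1 ?addr0 => [|k neq_km].
  by rewrite linearZ /= -scalemxAr -scalemxAl.
rewrite linearZ /= -scalemxAr -scalemxAl.
have km : (k < m)%N.
  rewrite ltn_neqAle -ltnS ltn_ord andbT.
  by apply: contraNneq neq_km => km; apply/eqP/val_inj.
by have := xK k km; rewrite /orthc sub_kermx => /eqP ->; rewrite scaler0.
Qed.

End SubspaceOperations.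

Section StabilizationPolynomials.
Variables (R : realType) (omega : nat -> R[i]).

Lemma stabpoly_id i : stabpoly omega i i = 1.
Proof. by rewrite /stabpoly big_geq. Qed.

Lemma stabpolySr i j : (i <= j)%N ->
  stabpoly omega i j.+1 = stabpoly omega i j * (1 - omega j.+1 *: 'X).
Proof. by move=> le_ij; rewrite /stabpoly big_nat_recr //= ltnS. Qed.

Hypothesis omega_neq0 : forall j, (0 < j)%N -> omega j != 0.

Lemma size_stabpoly i m : size (stabpoly omega i (i + m)) = m.+1.
Proof.
elim: m => [|m IHm]; first by rewrite addn0 stabpoly_id size_poly1.
have size_factor : size (1 - omega (i + m).+1 *: 'X) = 2.
  by rewrite addrC size_polyDl size_polyN size_scale ?size_polyX ?size_poly1 ?omega_neq0.
rewrite addnS (stabpolySr (leq_addr m i)) size_mul ?size_factor ?IHm ?addn2 //.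
all: by rewrite -size_poly_eq0 ?IHm ?size_factor.
Qed.

End StabilizationPolynomials.

Section PolynomialsOfMatrices.
Variables (R : realType) (N : nat).
Implicit Types (A : 'M[R[i]]_N) (p q : {poly R[i]}).

Lemma poly_mx_horner n (A : 'M[R[i]]_n.+1) p : poly_mx p A = horner_mx A p.
Proof.
rewrite -[in RHS](coefK p) poly_def linear_sum /=; apply: eq_bigr => k _.
by rewrite linearZ /= rmorphXn /= horner_mx_X.
Qed.

Lemma poly_mx1 A : poly_mx 1 A = 1%:M.
Proof. by rewrite /poly_mx size_poly1 big_ord1 coef1 expr0 scale1r. Qed.

Lemma poly_mxM A p q : poly_mx (p * q) A = poly_mx p A *m poly_mx q A.
Proof.
case: N A => [|n] A; first by rewrite [LHS]flatmx0 [RHS]flatmx0.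
by rewrite !poly_mx_horner rmorphM.
Qed.

Lemma poly_mx_1subZX A c : poly_mx (1 - c *: 'X) A = 1%:M - c *: A.
Proof.
case: N A => [|n] A; first by rewrite [LHS]flatmx0 [RHS]flatmx0.
rewrite poly_mx_horner rmorphB rmorph1 -mul_polyC rmorphM /=.
by rewrite horner_mx_C horner_mx_X -mulmxE mul_scalar_mx.
Qed.

End PolynomialsOfMatrices.

Section SonneveldSpaces.
Variables (R : realType) (N : nat) (A P : 'M[R[i]]_N) (omega : nat -> R[i]).
Hypothesis omega_neq0 : forall j, (0 < j)%N -> omega j != 0.
Local Notation G := (sonneveld A P omega).
Local Notation K := (krylov (adjH A) P).

Lemma mximg_poly_cap_orthc (p : {poly R[i]}) m (T : 'M_N) : size p = m.+1 ->
  (mximg (poly_mx p A) (T :&: orthc (K m)) :&: orthc P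
     :=: mximg (poly_mx p A) (T :&: orthc (K m.+1)))%MS.
Proof.
move=> sz_p; apply/eqmxP/andP; split; apply/rV_subP => x.
  rewrite sub_capmx => /andP [/sub_mximgP [z zTK ->] zP].
  apply/sub_mximgP; exists z => //; move: zTK.
  rewrite !sub_capmx sub_orthc_krylovS => /andP [-> zK].
  by rewrite zK -(sub_orthc_poly_mx sz_p zK).
move=> /sub_mximgP [z]; rewrite !sub_capmx sub_orthc_krylovS => /and3P [zT zK zP] ->.
rewrite (sub_orthc_poly_mx sz_p zK) zP andbT.
by apply/sub_mximgP; exists z; rewrite ?sub_capmx ?zT.
Qed.

Lemma sonneveld_addn i m :
  (G (i + m) :=: mximg (poly_mx (stabpoly omega i (i + m)) A) (G i :&: orthc (K m)))%MS.
Proof.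
elim: m => [|m IHm].
  rewrite addn0 stabpoly_id poly_mx1 mximg1.
  by apply/eqmx_sym/capmx_idPl/rV_subP => x _; apply/sub_orthc_krylovP.
rewrite addnS /= (stabpolySr omega (leq_addr m i)) mulrC.
rewrite poly_mxM poly_mx_1subZX mximgM.
apply: eqmxMr; apply: eqmx_trans (mximg_poly_cap_orthc _ (size_stabpoly omega_neq0 _ _)).
exact: cap_eqmx IHm (eqmx_refl _).
Qed.

End SonneveldSpaces.

Unset Implicit Arguments.

Theorem lemma1 (R : realType) (N : nat) (A P : 'M[R[i]]_N) (omega : nat -> R[i])
    (homega : forall j : nat, (0 < j)%N -> omega j != 0)
    (i j : nat) (hij : (i < j)%N) :
  (sonneveld A P omega j ==
     mximg (poly_mx (stabpoly omega i j) A)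
           (sonneveld A P omega i :&: orthc (krylov (adjH A) P (j - i)))%MS)%MS.
Proof.
have -> : j = (i + (j - i))%N by rewrite subnKC // ltnW.
by rewrite addKn; apply/eqmxP; apply: sonneveld_addn.
Qed.
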